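(* Suppose exclusion, random assignment and consistency hold, and let $\mathcal P$ be the induced observed law. Then for every $y'\in\{0,\dots,n-2\}$, every $j'\in[\ell]$ and every non-constant $(j_0,\dots,j_{n-1})\in([\ell]\setminus\{j'\})^n$, $$p_{y'1,j'}\le\sum_{j\in\{j_0,\dots,j_{n-1}\}}p_{y'1,j}+\sum_{y=0}^{n-1}p_{y0,j_y},$$ where the first sum runs over the set of distinct values among $j_0,\dots,j_{n-1}$. Moreover, none of these inequalities is implied by the others (for each one there is an observed law satisfying all the other inequalities of this family but violating it), and their total number is $(n-1)\ell\big((\ell-1)^n-(\ell-1)\big)$.
   Context: $D\in\{0,1\}$ treatment; $Y$ outcome with values $\gamma_0<\dots<\gamma_{n-1}$; instrument $Z$ with values in $[\ell]=\{0,\dots,\ell-1\}$, $\mathcal P(Z=z)>0$; $[n]=\{0,\dots,n-1\}$. Potential outcomes $Y^{(d,z)}$, potential treatments $D^{(z)}$. Exclusion: $Y^{(d,z)}=Y^{(d,z')}$ a.s. for all $z,z',d$ (written $Y^{(d)}$). Random assignment: $Z\perp(Y^{(0)},Y^{(1)},D^{(0)},\dots,D^{(\ell-1)})$. Consistency: $Y=(1-D)Y^{(0)}+DY^{(1)}$, $D=\sum_z\mathbb 1(Z=z)D^{(z)}$. $p_{yd,z}=\mathcal P(Y=\gamma_y,D=d\mid Z=z)$. A tuple is non-constant if not all entries are equal. *)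

From HB Require Import structures.
From mathcomp Require Import all_boot all_order all_algebra.
From mathcomp Require Import all_classical all_reals all_analysis.
Set Implicit Arguments. Unset Strict Implicit. Unset Printing Implicit Defensive.
Import Order.TTheory GRing.Theory Num.Theory.
Local Open Scope classical_set_scope.
Local Open Scope ring_scope.

(* Outcome values gamma_0 < ... < gamma_{n-1} are represented by their index
   in 'I_n; the instrument takes values in 'I_l; the treatment D is a bool
   (true = 1, false = 0). *)

Section IV.
Variables (R : realType) (n l : nat).
Variables (dsp : measure_display) (T : measurableType dsp) (P : probability T R).

Definition rv_meas {V : Type} (X : T -> V) : Prop :=
  forall v, measurable [set w | X w = v].

Definition indep_discrete {U V : Type} (X : T -> U) (W : T -> V) : Prop :=
  forall u v, P [set w | X w = u /\ W w = v] =
              (P [set w | X w = u] * P [set w | W w = v])%E.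

(* The structural IV model, with
   Ydz d z = Y^(d,z), Yd d = Y^(d), Dz z = D^(z). *)
Definition iv_model (Ydz : bool -> 'I_l -> T -> 'I_n) (Yd : bool -> T -> 'I_n)
  (Dz : 'I_l -> T -> bool) (Z : T -> 'I_l) (Y : T -> 'I_n) (D : T -> bool) : Prop :=
  ((forall d z, rv_meas (Ydz d z)) /\ (forall d, rv_meas (Yd d)) /\
      (forall z, rv_meas (Dz z)) /\ rv_meas Z) /\
      (forall z, (0 < P [set w | Z w = z])%E) /\
      (* exclusion: Y^(d,z) = Y^(d) almost surely, for all d, z *)
      (forall d z, P [set w | Ydz d z w <> Yd d w] = 0%E) /\
      (* random assignment: Z independent of (Y^(0), Y^(1), D^(0), ..., D^(l-1)) *)
      indep_discrete Z (fun w => (Yd false w, Yd true w, [ffun z => Dz z w])) /\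
      (* consistency *)
      (forall w, Y w = if D w then Yd true w else Yd false w) /\
      (forall w, D w = Dz (Z w) w).

Definition obs_law (Y : T -> 'I_n) (D : T -> bool) (Z : T -> 'I_l)
  (y : 'I_n) (d : bool) (z : 'I_l) : R :=
  fine (P [set w | Y w = y /\ D w = d /\ Z w = z]) / fine (P [set w | Z w = z]).

End IV.

Definition is_obs_law (R : realType) (n l : nat) (p : 'I_n -> bool -> 'I_l -> R) : Prop :=
  (forall y d z, 0 <= p y d z) /\
  (forall z, \sum_(y < n) \sum_(d : bool) p y d z = 1).

Definition ineq_index (n l : nat) : {set 'I_n * 'I_l * n.-tuple 'I_l} :=
  [set t : 'I_n * 'I_l * n.-tuple 'I_l | [&& (t.1.1 < n.-1)%N, t.1.2 \notin t.2 & ~~ constant t.2]].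

Definition ineq_holds (R : realType) (n l : nat) (p : 'I_n -> bool -> 'I_l -> R)
  (t : 'I_n * 'I_l * n.-tuple 'I_l) : Prop :=
  let: (y', j', J) := t in
  p y' true j' <= \sum_(j : 'I_l | j \in J) p y' true j
                  + \sum_(y < n) p y false (tnth J y).

From HB Require Import structures.
From mathcomp Require Import all_boot all_order all_algebra.
From mathcomp Require Import all_classical all_reals all_analysis.
Import Order.TTheory GRing.Theory Num.Theory.

Set Implicit Arguments.
Unset Strict Implicit.
Unset Printing Implicit Defensive.

(* Let [W = (Y^(0), Y^(1), (D^(z))_z)] be the response type of a unit. Consistency makes
   [(Y, D)] a function of [W] and [Z], and random assignment makes [Z] independent of [W], so
   every induced observed law is the mixture [p_{yd,z} = sum_{v yields (y,d) at z} P(W = v)].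
   Each inequality holds type by type: a type counted in [p_{y'1,j'}] is either treated under
   some [j_k], hence counted in [p_{y'1,j_k}], or untreated under [j_{Y^(0)}], hence counted in
   [p_{Y^(0) 0, j_{Y^(0)}}]. Irredundancy is witnessed by an explicit law for each inequality,
   and the count splits as [(n - 1)] choices of [y'], [l] of [j'] and [(l-1)^n - (l-1)]
   non-constant tuples avoiding [j']. *)

Section tuples_avoiding.
Variables (T : finType) (n : nat) (x : T).

Lemma card_tuple_notin : #|[set J : n.-tuple T | x \notin J]| = #|T|.-1 ^ n.
Proof.
have tuple_ffun_bij : {on [set J : n.-tuple T | x \notin J], bijective (@tuple_of_finfun T n)}.
  exact/onW_bij/(Bijective (@tuple_of_finfunK _ _) (@finfun_of_tupleK _ _)).
rewrite -(on_card_preimset tuple_ffun_bij) -(cardC1 x) -[n in RHS]card_ord -card_ffun_on.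
apply: eq_card => f; rewrite !inE; apply/negP/ffun_onP => [x_notin_f i | f_neq_x].
  rewrite inE; apply/eqP => fi_x; apply: x_notin_f.
  by apply/tnthP; exists i; rewrite tnth_mktuple fi_x.
by case/tnthP => i; rewrite tnth_mktuple => x_fi; have := f_neq_x i; rewrite inE -x_fi eqxx.
Qed.

Lemma card_constant_tuple_notin : 0 < n ->
  #|[set J : n.-tuple T | (x \notin J) && constant J]| = #|T|.-1.
Proof.
move=> n_gt0; pose cst z : n.-tuple T := [tuple of nseq n z].
have cst_inj : injective cst.
  by move=> a b /(congr1 (fun J => tnth J (Ordinal n_gt0))); rewrite !tnth_nseq.
rewrite -(cardC1 x) -(card_imset _ cst_inj); apply: eq_card => J; rewrite !inE.
apply/andP/imsetP => [[x_notin_J /(constantP x)[z J_z]] | [z z_neq_x ->]].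
  exists z; last by apply: val_inj; rewrite /= J_z size_tuple.
  by apply: contraNneq x_notin_J => <-; rewrite -has_pred1 J_z has_nseq size_tuple n_gt0 /= eqxx.
by rewrite inE in z_neq_x; rewrite mem_nseq n_gt0 eq_sym z_neq_x constant_nseq.
Qed.

Lemma card_nonconstant_tuple_notin : 0 < n ->
  #|[set J : n.-tuple T | (x \notin J) && ~~ constant J]| = #|T|.-1 ^ n - #|T|.-1.
Proof.
move=> n_gt0; rewrite -card_tuple_notin -(card_constant_tuple_notin n_gt0).
have -> : [set J : n.-tuple T | (x \notin J) && ~~ constant J] =
    [set J : n.-tuple T | x \notin J] :\: [set J : n.-tuple T | constant J].
  by apply/setP => J; rewrite !inE andbC.
by rewrite cardsD; congr (_ - _); apply: eq_card => J; rewrite !inE.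
Qed.

End tuples_avoiding.

Lemma card_ineq_index n l : #|ineq_index n l| = (n - 1) * l * ((l - 1) ^ n - (l - 1)).
Proof.
rewrite -sum1_card; under eq_bigl => t do rewrite inE.
rewrite -(pair_big_dep (fun i : 'I_n * 'I_l => i.1 < n.-1)
  (fun i (J : n.-tuple 'I_l) => (i.2 \notin J) && ~~ constant J) (fun _ _ => 1)) /=.
have inner (i : 'I_n * 'I_l) :
    \sum_(J : n.-tuple 'I_l | (i.2 \notin J) && ~~ constant J) 1 = (l - 1) ^ n - (l - 1).
  have := card_nonconstant_tuple_notin i.2 (leq_ltn_trans (leq0n _) (ltn_ord i.1)).
  rewrite card_ord subn1 => <-.
  by rewrite sum1_card; apply: eq_card => J; rewrite !inE.
rewrite (eq_bigr _ (fun i _ => inner i)) sum_nat_const.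
have -> : #|[pred i : 'I_n * 'I_l | i.1 < n.-1]| = #|[predX [pred y : 'I_n | y < n.-1] & 'I_l]|.
  by apply: eq_card => -[y j]; rewrite !inE andbT.
rewrite cardX card_ord subn1; congr (_ * _ * _).
rewrite -sum1_card (eq_bigl (fun y : 'I_n => true && (y < n.-1))) //.
by rewrite (big_ord_narrow_cond (leq_pred n)) sum1_card card_ord subn1.
Qed.

Local Open Scope classical_set_scope.
Local Open Scope ring_scope.

Section response_types.
Variables (n l : nat).

(* [(Y^(0), Y^(1), (D^(z))_z)] *)
Definition response_type := ('I_n * 'I_n * {ffun 'I_l -> bool})%type.

Definition yields (v : response_type) (y : 'I_n) (d : bool) (z : 'I_l) : bool :=
  (v.2 z == d) && ((if d then v.1.2 else v.1.1) == y).

Lemma yields_cover v y' j' (J : n.-tuple 'I_l) : yields v y' true j' ->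
  (exists2 j, j \in J & yields v y' true j) \/ yields v v.1.1 false (tnth J v.1.1).
Proof.
case/andP=> _ v_y'; case D_j: (v.2 (tnth J v.1.1)).
  by left; exists (tnth J v.1.1); rewrite ?mem_tnth // /yields D_j eqxx.
by right; rewrite /yields D_j !eqxx.
Qed.

Lemma mixture_ineq_holds (R : realType) (pi : response_type -> R)
    (p : 'I_n -> bool -> 'I_l -> R) :
  (forall v, 0 <= pi v) ->
  (forall y d z, p y d z = \sum_(v | yields v y d z) pi v) ->
  forall t, ineq_holds p t.
Proof.
move=> pi_ge0 p_mix [[y' j'] J] /=; rewrite !p_mix.
under eq_bigr => j _ do rewrite p_mix big_mkcond.
under [X in _ <= _ + X]eq_bigr => y _ do rewrite p_mix big_mkcond.
rewrite big_mkcond exchange_big [X in _ <= _ + X]exchange_big -big_split /=.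
apply: ler_sum => v _.
have sum_ge0 (I : finType) (P : pred I) (b : pred I) :
  0 <= \sum_(i | P i) (if b i then pi v else 0) by apply: sumr_ge0 => i _; case: (b i).
case: ifP => [/(yields_cover J)[[j j_J yields_j]|yields_y]|_].
- apply: ler_wpDr; first exact: sum_ge0.
  by rewrite (bigD1 j) //= yields_j lerDl sum_ge0.
- apply: ler_wpDl; first exact: sum_ge0.
  by rewrite (bigD1 v.1.1) //= yields_y lerDl sum_ge0.
- exact: addr_ge0.
Qed.

End response_types.

Lemma measure_bigcup_finpred d (T : ringOfSetsType d) (R : realFieldType)
    (mu : {content set T -> \bar R}) (I : finType) (S : pred I) (F : I -> set T) :
  (forall i, measurable (F i)) -> trivIset setT F ->
  mu (\bigcup_(i in [set i | S i]) F i) = (\sum_(i | S i) mu (F i))%E.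
Proof.
move=> F_meas F_triv.
rewrite measure_fin_bigcup //; [|exact: finite_finset|exact: sub_trivIset F_triv].
rewrite (fsbigE (enum S)) ?enum_uniq //.
- by rewrite big_enum_cond; apply: eq_bigl => i; rewrite mem_setE andbb.
- by move=> i /=; rewrite mem_enum.
- by move=> i /= S_i; rewrite mem_enum unfold_in S_i.
Qed.

Section observed_law_mixture.
Variables (R : realType) (n l : nat) (dsp : measure_display) (T : measurableType dsp).
Variables (P : probability T R) (Yd : bool -> T -> 'I_n) (Dz : 'I_l -> T -> bool).
Variables (Z : T -> 'I_l) (Y : T -> 'I_n) (D : T -> bool).

Definition response (w : T) : response_type n l := (Yd false w, Yd true w, [ffun z => Dz z w]).

Hypothesis Yd_meas : forall d, rv_meas (Yd d).
Hypothesis Dz_meas : forall z, rv_meas (Dz z).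
Hypothesis Z_meas : rv_meas Z.
Hypothesis PZ_gt0 : forall z, (0 < P [set w | Z w = z])%E.
Hypothesis Z_indep_response : indep_discrete P Z response.
Hypothesis Y_consistent : forall w, Y w = if D w then Yd true w else Yd false w.
Hypothesis D_consistent : forall w, D w = Dz (Z w) w.

Lemma measurable_response v : measurable [set w | response w = v].
Proof.
have -> : [set w | response w = v] = [set w | Yd false w = v.1.1] `&` [set w | Yd true w = v.1.2]
    `&` \bigcap_(z in [set: 'I_l]) [set w | Dz z w = v.2 z].
  apply/seteqP; split => w /=.
    by move=> <-; split; [split|] => // z _ /=; rewrite ffunE.
  case: v => [[y0 y1] f] /= [[<- <-] Dz_f]; congr (_, _, _).
  by apply/ffunP => z; rewrite ffunE; exact: Dz_f.
apply: measurableI; first by apply: measurableI; exact: Yd_meas.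
by apply: fin_bigcap_measurable => // z _; exact: Dz_meas.
Qed.

Lemma obs_event_response y d z :
  [set w | Y w = y /\ D w = d /\ Z w = z] =
  \bigcup_(v in [set v | yields v y d z]) [set w | Z w = z /\ response w = v].
Proof.
apply/seteqP; split => w /=.
  move=> [<- [<- Z_w]]; exists (response w) => //=.
  by rewrite /yields /= ffunE -Z_w -D_consistent Y_consistent !eqxx.
case=> v /andP[/eqP D_w /eqP Y_w] [Z_w resp_w]; subst v.
rewrite /= ffunE -Z_w -D_consistent in D_w Y_w.
by rewrite Y_consistent D_w.
Qed.

Lemma obs_law_mixture y d z :
  obs_law P Y D Z y d z = \sum_(v | yields v y d z) fine (P [set w | response w = v]).
Proof.
have PZ_fin : P [set w | Z w = z] \is a fin_num by apply: fin_num_measure.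
have Pv_fin v : P [set w | response w = v] \is a fin_num.
  exact/fin_num_measure/measurable_response.
rewrite /obs_law obs_event_response measure_bigcup_finpred; last 2 first.
- by move=> v; apply: measurableI; [exact: Z_meas | exact: measurable_response].
- by move=> u v _ _ [w [[_ <-] [_ <-]]].
rewrite (eq_bigr (fun v => (fine (P [set w | Z w = z]) * fine (P [set w | response w = v]))%:E)).
  rewrite sumEFin /= -mulr_sumr mulrC mulKf //.
  by rewrite gt_eqF // -lte_fin fineK.
by move=> v _; rewrite EFinM !fineK //; exact: Z_indep_response.
Qed.

End observed_law_mixture.

Lemma tnth_neq_notin (T : eqType) n (t : n.-tuple T) x i : x \notin t -> tnth t i != x.
Proof. by apply: contraNneq => <-; exact: mem_tnth. Qed.

Section separating_law.
Variables (R : realType) (n l : nat) (y' : 'I_n) (j' : 'I_l) (J : n.-tuple 'I_l).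
Hypothesis j'_notin_J : j' \notin J.
Hypothesis J_nonconstant : ~~ constant J.

Definition miss_count (z : 'I_l) : nat := #|[pred y : 'I_n | tnth J y != z]|.

(* Under [Z = j'], [Y] is uniform and [D = (Y == y')]; under [Z = z != j'], [D = 0] and [Y] is
   uniform on the [y] with [tnth J y != z], which is non-empty as [J] is non-constant. Every
   term [p_{y0,j_y}] of the inequality of [(y', j', J)] then vanishes, whereas any other tuple
   [J2] has some [tnth J2 y != tnth J y], and the term [p_{y0,tnth J2 y} >= 1/n] pays for
   [p_{y'1,j'} = 1/n]. *)
Definition separating_law (y : 'I_n) (d : bool) (z : 'I_l) : R :=
  if z == j' then (if d then y == y' else y != y')%:R / n%:R
  else if d then 0 else (tnth J y != z)%:R / (miss_count z)%:R.

Let n_gt0 : (0 < n)%N := leq_ltn_trans (leq0n _) (ltn_ord y').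

Lemma miss_count_gt0 z : (0 < miss_count z)%N.
Proof.
rewrite lt0n; apply: contraNneq J_nonconstant => /card0_eq J_z.
apply/(constantP z); exists z; apply/all_pred1P/allP => _ /tnthP[y ->].
by have := J_z y; rewrite !inE => /negbFE.
Qed.

Lemma separating_law_ge0 y d z : 0 <= separating_law y d z.
Proof. by rewrite /separating_law; case: ifP => _; case: d => //; rewrite divr_ge0. Qed.

Lemma separating_law_is_obs_law : is_obs_law separating_law.
Proof.
split=> [|z]; first exact: separating_law_ge0.
under eq_bigr => y _ do rewrite big_bool /= /separating_law.
case: eqP => _.
  have indicators_sum (y : 'I_n) : (y == y')%:R + (y != y')%:R = 1 :> R.
    by case: eqP; rewrite ?addr0 ?add0r.
  under eq_bigr => y _ do rewrite -mulrDl indicators_sum.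
  by rewrite sumr_const card_ord -(mulr_natr (1 / n%:R)) div1r mulVf // pnatr_eq0 -lt0n.
under eq_bigr => y _ do rewrite add0r mulrb.
by rewrite -mulr_suml -big_mkcond sumr_const mulfV // pnatr_eq0 -lt0n miss_count_gt0.
Qed.

Lemma separating_law_violates : ~ ineq_holds separating_law (y', j', J).
Proof.
rewrite /ineq_holds big1 => [|j j_J]; last first.
  by rewrite /separating_law ifN //; apply: contraTneq j_J => ->.
rewrite big1 => [|y _]; last first.
  by rewrite /separating_law ifN ?(tnth_neq_notin _ j'_notin_J) // eqxx mul0r.
by rewrite /separating_law !eqxx addr0 leNgt divr_gt0 ?ltr0n.
Qed.

Lemma separating_law_ineq_holds t :
  t \in ineq_index n l -> t <> (y', j', J) -> ineq_holds separating_law t.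
Proof.
case: t => [[y2 j2] J2]; rewrite inE /= => /and3P[_ j'_notin_J2 _] t_neq.
have sum_ge0 (I : finType) (P : pred I) (F : I -> 'I_n) (G : I -> 'I_l) (d : bool) :
    0 <= \sum_(i | P i) separating_law (F i) d (G i).
  by apply: sumr_ge0 => i _; exact: separating_law_ge0.
rewrite /ineq_holds {1}/separating_law.
have [j2_eq|_] := eqVneq j2 j'; last exact: addr_ge0.
subst j2; have [y2_eq|_] := eqVneq y2 y'; last by rewrite mul0r addr_ge0.
subst y2.
have [y J2_y] : exists y, tnth J2 y != tnth J y.
  apply/existsP; apply: contra_notT t_neq => /existsPn J_J2.
  by congr (_, _); apply: eq_from_tnth => y; apply/eqP; rewrite -[_ == _]negbK J_J2.
rewrite mul1r; apply: ler_wpDl; first exact: sum_ge0.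
rewrite (bigD1 y) //=; apply: ler_wpDr; first exact: sum_ge0.
rewrite /separating_law ifN ?(tnth_neq_notin _ j'_notin_J2) // eq_sym J2_y div1r.
rewrite lef_pV2 ?posrE ?ltr0n ?miss_count_gt0 //.
by rewrite ler_nat -[n in (_ <= n)%N]card_ord max_card.
Qed.

End separating_law.

Theorem theorem6 (R : realType) (n l : nat) :
  (* validity: every observed law induced by the IV model satisfies the family *)
  (forall (dsp : measure_display) (T : measurableType dsp) (P : probability T R)
          (Ydz : bool -> 'I_l -> T -> 'I_n) (Yd : bool -> T -> 'I_n)
          (Dz : 'I_l -> T -> bool) (Z : T -> 'I_l) (Y : T -> 'I_n) (D : T -> bool),
      iv_model P Ydz Yd Dz Z Y D ->
      forall t, t \in ineq_index n l -> ineq_holds (obs_law P Y D Z) t) /\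
  (* irredundancy: each inequality can be violated while all others hold *)
  (forall t, t \in ineq_index n l ->
     exists p : 'I_n -> bool -> 'I_l -> R,
       [/\ is_obs_law p, ~ ineq_holds p t &
           forall t', t' \in ineq_index n l -> t' <> t -> ineq_holds p t']) /\
  (* number of inequalities *)
  #|ineq_index n l| = ((n - 1) * l * ((l - 1) ^ n - (l - 1)))%N.
Proof.
split.
  move=> dsp T P Ydz Yd Dz Z Y D [[_ [Yd_meas [Dz_meas Z_meas]]]].
  move=> [PZ_gt0 [_ [Z_indep [Y_consistent D_consistent]]]] t _.
  apply: (mixture_ineq_holds (fun v => fine_ge0 (measure_ge0 P [set w | response Yd Dz w = v]))).
  exact: obs_law_mixture.
split; last exact: card_ineq_index.
case=> [[y' j'] J] t_index.
have := t_index; rewrite inE => /and3P[_ j'_notin_J J_nonconstant].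
exists (separating_law R y' j' J); split.
- exact: separating_law_is_obs_law.
- exact: separating_law_violates.
- by move=> t; apply: separating_law_ineq_holds.
Qed.
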